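(* Let $S=\{(x_i,y_i)\}_{i=1}^n$ be a training set, $\{f_\theta\}$ a parameterized family of classifiers, and $\hat\theta\in\arg\min_\theta L_{\textrm{close-}1}(\{\ell(y_i,f_\theta(x_i))\}_{i=1}^n)$. Then $$\min_\theta L_{0-1}(\{(y_i,f_\theta(x_i))\}_{i=1}^n)=L_{0-1}(\hat\theta),$$ where $L_{0-1}(\theta)$ denotes the number of training examples misclassified by $f_\theta$.
   Context: Binary classification with labels $y\in\{-1,+1\}$ and real-valued predictions. An individual loss $\ell(y,f(x))\ge 0$ comes with a threshold $T$ such that an example is correctly classified iff its individual loss is below $T$. Given individual losses $\ell_1,\dots,\ell_n$, let $\ell_{[i]}$ be the individual loss with the $i$-th smallest value of $|\ell_j-T|$. For a constant $M$ at least as large as every individual loss that occurs, the close-$k$ aggregate loss is $L_{\textrm{close-}k}(\{\ell_i\})=\sum_{i=1}^n c_i$ with $c_i=\ell_{[i]}$ if $i\le k$, $c_i=0$ if $i>k$ and $\ell_{[i]}$ is correctly classified, and $c_i=M$ if $i>k$ and $\ell_{[i]}$ is incorrectly classified; here $k=1$. *)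

From HB Require Import structures.
From mathcomp Require Import all_boot all_order all_algebra.
Set Implicit Arguments. Unset Strict Implicit. Unset Printing Implicit Defensive.
Import Order.TTheory GRing.Theory Num.Theory.
Local Open Scope ring_scope.

Section CloseK.
Variable R : realFieldType.

Definition sort_by_dist (T : R) (ls : seq R) : seq R :=
  sort (fun a b => `|a - T| <= `|b - T|) ls.

(* close-k aggregate loss: the i-th closest loss l_[i] (0-based index i)
   contributes l_[i] if i < k; otherwise 0 if it is correctly classified
   (l_[i] < T) and M if it is incorrectly classified. *)
Definition close_k_loss (T M : R) (k : nat) (ls : seq R) : R :=
  let s := sort_by_dist T ls in
  \sum_(i < size s) (if (i < k)%N then s`_i else if s`_i < T then 0 else M).

Definition losses (X Theta : Type) (n : nat) (x : 'I_n -> X) (y : 'I_n -> R)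
  (f : Theta -> X -> R) (l : R -> R -> R) (th : Theta) : seq R :=
  [seq l (y i) (f th (x i)) | i <- enum 'I_n].

Definition L01 (X Theta : Type) (n : nat) (x : 'I_n -> X) (y : 'I_n -> R)
  (f : Theta -> X -> R) (th : Theta) : nat :=
  #|[set i : 'I_n | ~~ (0 < y i * f th (x i))]|.

End CloseK.

(* Let penalty v := if v < T then 0 else M. After sorting by distance to T,
   close_k_loss T M 1 ls is the closest loss v plus the penalties of all the
   other losses, i.e. M * #{misclassified} + (v - penalty v). When every loss
   lies in [0, M] and 0 < T <= M, the correction v - penalty v lies in
   [T - M, T), an interval of length M, so the close-1 loss is strictly
   increasing in the number of misclassified examples. If one list of losses
   has strictly more misclassified entries than another of the same length,
   the first has an entry >= T and the second one < T, which forces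
   0 < T <= M. A minimiser of the close-1 loss therefore minimises the 0-1
   loss. *)

From HB Require Import structures.
From mathcomp Require Import all_boot all_order all_algebra.
From mathcomp Require Import lra.
Import Order.TTheory GRing.Theory Num.Theory.
Local Open Scope ring_scope.

Section CloseOneLoss.
Variables (R : realFieldType) (T M : R).

Definition penalty (v : R) : R := if v < T then 0 else M.

Lemma sum_penalty (ls : seq R) : \sum_(v <- ls) penalty v = M *+ count (>= T) ls.
Proof.
elim: ls => [|v ls IH]; first by rewrite big_nil.
by rewrite big_cons IH /= mulrnDr /penalty leNgt; case: (v < T); rewrite ?add0r.
Qed.

Lemma close1_lossE (ls : seq R) : ls != [::] ->
  exists2 v, v \in ls &
    close_k_loss T M 1 ls = M *+ count (>= T) ls + (v - penalty v).
Proof.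
move=> ls_neq0; rewrite /close_k_loss -sum_penalty.
have sorted_perm : perm_eq (sort_by_dist T ls) ls by rewrite perm_sort.
rewrite -(perm_big _ sorted_perm).
have mem_sorted v : v \in sort_by_dist T ls -> v \in ls by rewrite mem_sort.
case: (sort_by_dist T ls) sorted_perm mem_sorted => [|v s] sorted_perm mem_sorted.
  by move: ls_neq0; rewrite -size_eq0 -(perm_size sorted_perm).
exists v; first by rewrite mem_sorted ?mem_head.
rewrite big_ord_recl big_cons /=.
have -> : \sum_(i < size s) (if (bump 0 i < 1)%N then (v :: s)`_(bump 0 i)
            else if (v :: s)`_(bump 0 i) < T then 0 else M)
          = \sum_(w <- s) penalty w.
  by rewrite (big_nth 0) big_mkord; apply: eq_bigr.
rewrite /penalty; lra.
Qed.

Lemma sub_penalty_bounds (v : R) : 0 < T -> T <= M -> 0 <= v <= M ->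
  T - M <= v - penalty v < T.
Proof. by rewrite /penalty; case: (ltP v T) => /= vT T_gt0 TM /andP[v_ge0 v_leM]; lra. Qed.

Lemma close1_loss_lt_count (ls1 ls2 : seq R) :
  size ls1 = size ls2 ->
  {in ls1, forall v, 0 <= v <= M} -> {in ls2, forall v, 0 <= v <= M} ->
  (count (>= T) ls1 < count (>= T) ls2)%N ->
  close_k_loss T M 1 ls1 < close_k_loss T M 1 ls2.
Proof.
move=> size12 bnd1 bnd2 count12.
have /hasP[u u_in /= Tu] : has (>= T) ls2.
  by rewrite has_count (leq_ltn_trans _ count12).
have /hasP[w w_in /= wT] : has (predC (>= T)) ls1.
  rewrite has_count -(ltn_add2l (count (>= T) ls1)) addn0 count_predC size12.
  exact: leq_trans count12 (count_size _ _).
have TM : T <= M by case/andP: (bnd2 u u_in) => _; apply: le_trans.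
have T_gt0 : 0 < T by case/andP: (bnd1 w w_in) => w_ge0 _; rewrite -ltNge in wT; lra.
have ls_neq0 (s : seq R) (v : R) : v \in s -> s != [::] by case: s.
have [v1 v1_in ->] := close1_lossE _ (ls_neq0 _ _ w_in).
have [v2 v2_in ->] := close1_lossE _ (ls_neq0 _ _ u_in).
have := sub_penalty_bounds _ T_gt0 TM (bnd1 _ v1_in).
have := sub_penalty_bounds _ T_gt0 TM (bnd2 _ v2_in).
have := ler_wpMn2l (le_trans (ltW T_gt0) TM) count12.
rewrite mulrS; lra.
Qed.

End CloseOneLoss.

Lemma count_losses_L01 {R : realFieldType} {X Theta : Type} {n : nat}
  {x : 'I_n -> X} {y : 'I_n -> R} {f : Theta -> X -> R} {l : R -> R -> R} {T : R}
  (hT : forall th i, l (y i) (f th (x i)) < T <-> 0 < y i * f th (x i)) (th : Theta) :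
  count (>= T) (losses x y f l th) = L01 x y f th.
Proof.
rewrite /losses /L01 count_map -sum1_count big_enum_cond -sum1_card.
by apply: eq_bigl => i; rewrite !inE /= leNgt; congr (~~ _); apply/idP/idP => /hT.
Qed.

Theorem lemma4 (R : realFieldType) (X Theta : Type) (n : nat)
  (x : 'I_n -> X) (y : 'I_n -> R) (f : Theta -> X -> R) (l : R -> R -> R)
  (T M : R)
  (hy : forall i, y i = 1 \/ y i = -1)
  (hl0 : forall a b, 0 <= l a b)
  (hT : forall th i, l (y i) (f th (x i)) < T <-> 0 < y i * f th (x i))
  (hM : forall th i, l (y i) (f th (x i)) <= M)
  (thhat : Theta)
  (hmin : forall th, close_k_loss T M 1 (losses x y f l thhat)
                     <= close_k_loss T M 1 (losses x y f l th)) :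
  forall th, (L01 x y f thhat <= L01 x y f th)%N.
Proof.
move=> th; rewrite leqNgt; apply/negP => lt_th_thhat.
have losses_bounded t : {in losses x y f l t, forall v, 0 <= v <= M}.
  by move=> _ /mapP[i _ ->]; rewrite hl0 hM.
have := hmin th; apply/negP; rewrite -ltNge.
apply: close1_loss_lt_count => //; first by rewrite !size_map.
by rewrite !(count_losses_L01 hT).
Qed.
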